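(* Let $M$ be a compact Riemannian manifold and $f\colon M\to M$ a $C^1$ map. For every open cover $(U_i)_i$ of $(\overleftarrow M_f,d_1)$ there exists a partition of unity $(\rho_i)_i$ subordinate to it such that each $\rho_i\colon\overleftarrow M_f\to\mathbb R$ is $d_1$-continuous and $d_\infty$-Lipschitz.
   Context: $\overleftarrow M_f=\{(x_n)_{n\in\mathbb Z}\in M^{\mathbb Z}: f(x_n)=x_{n+1}\ \forall n\}$ with $d_1(\underline x,\underline y)=\sum_n2^{-|n|}d(x_n,y_n)$ and $d_\infty(\underline x,\underline y)=\sup_n d(x_n,y_n)$. *)

From Stdlib Require Import Reals Lra List ZArith.
From Coquelicot Require Import Coquelicot.
Open Scope R_scope.

Definition is_metric {M : Type} (d : M -> M -> R) : Prop :=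
  (forall x y, 0 <= d x y) /\
  (forall x y, d x y = 0 <-> x = y) /\
  (forall x y, d x y = d y x) /\
  (forall x y z, d x z <= d x y + d y z).

Definition open_in {X : Type} (dist : X -> X -> R) (U : X -> Prop) : Prop :=
  forall x, U x -> exists eps, 0 < eps /\ forall y, dist x y < eps -> U y.

Definition compact_metric {M : Type} (d : M -> M -> R) : Prop :=
  forall (I : Type) (U : I -> M -> Prop),
    (forall i, open_in d (U i)) -> (forall x, exists i, U i x) ->
    exists l : list I, forall x, exists i, In i l /\ U i x.

Definition continuous_metric {X Y : Type} (dX : X -> X -> R) (dY : Y -> Y -> R)
  (g : X -> Y) : Prop :=
  forall x eps, 0 < eps -> exists delta, 0 < delta /\
    forall y, dX x y < delta -> dY (g x) (g y) < eps.

Record orbit_space {M : Type} (f : M -> M) : Type := mkOrbit {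
  orb :> Z -> M;
  orbP : forall n : Z, f (orb n) = orb (n + 1)%Z }.

(* d_1(x,y) = sum_{n in Z} 2^{-|n|} d(x_n,y_n), written as the n = 0 term plus
   the series over k >= 1 of 2^{-k} (d(x_k,y_k) + d(x_{-k},y_{-k})). *)
Definition d_one {M : Type} (d : M -> M -> R) (f : M -> M)
  (x y : orbit_space f) : R :=
  d (x 0%Z) (y 0%Z) +
  Series (fun k : nat =>
    (/ 2) ^ (S k) *
    (d (x (Z.of_nat (S k))) (y (Z.of_nat (S k))) +
     d (x (- Z.of_nat (S k))%Z) (y (- Z.of_nat (S k))%Z))).

Definition d_infty {M : Type} (d : M -> M -> R) (f : M -> M)
  (x y : orbit_space f) : R :=
  real (Lub_Rbar (fun r => exists n : Z, r = d (x n) (y n))).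

Definition lipschitz_wrt {X : Type} (dist : X -> X -> R) (g : X -> R) : Prop :=
  exists L : R, forall x y, Rabs (g x - g y) <= L * dist x y.

Definition sum_list {I : Type} (l : list I) (a : I -> R) : R :=
  fold_right Rplus 0 (map a l).

(* (rho_i)_{i in I} is a partition of unity on (X, dist) subordinate to (U_i):
   nonnegative, the closure of {rho_i <> 0} lies in U_i, locally finite,
   and the (locally finite) sum of the rho_i is 1 everywhere. *)
Definition partition_of_unity_subordinate {X I : Type} (dist : X -> X -> R)
  (U : I -> X -> Prop) (rho : I -> X -> R) : Prop :=
  (forall i x, 0 <= rho i x) /\
  (forall i x,
     (forall eps, 0 < eps -> exists z, dist x z < eps /\ rho i z <> 0) ->
     U i x) /\
  (forall x, exists eps, 0 < eps /\ exists l : list I, NoDup l /\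
     (forall i y, ~ In i l -> dist x y < eps -> rho i y = 0) /\
     sum_list l (fun i => rho i x) = 1).

(* The orbit space (M_f, d_1) is compact.  It is totally bounded: on a window [-N, N]
   an orbit is determined by its coordinate -N, the iterates f^j (j <= 2N) are
   uniformly continuous on the compact space M, and the coordinates outside the window
   contribute at most 2 D 2^-N.  It is complete: the coordinates of a Cauchy sequence
   converge in M, and by continuity of f their limits form an orbit.
   On a compact pseudometric space, choose finitely many balls B(p, r) covering it with
   each B(p, 3r) inside some U_i; the tents max(0, 2r - d_1(p, .)) are 1-Lipschitz and
   their sum is bounded below by the least radius, so the normalised sums over the balls
   attached to each i form a d_1-Lipschitz partition of unity.  Since d_1 <= 3 d_infty,
   these functions are also d_infty-Lipschitz. *)

From Stdlib Require Import Reals Lra Lia List ZArith.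
From Stdlib Require Import Classical ClassicalEpsilon IndefiniteDescription.
From Coquelicot Require Import Coquelicot.
Open Scope R_scope.

Section SumList.
Context {A : Type}.
Implicit Types (l : list A) (u v : A -> R).

Lemma sum_list_cons a l u : sum_list (a :: l) u = u a + sum_list l u.
Proof. reflexivity. Qed.

Lemma sum_list_zero l u : (forall a, In a l -> u a = 0) -> sum_list l u = 0.
Proof.
  induction l as [|a l IH]; intros H; [reflexivity|].
  rewrite sum_list_cons, H, IH; [ring| |left; reflexivity].
  intros b Hb; apply H; right; exact Hb.
Qed.

Lemma sum_list_plus l u v : sum_list l (fun a => u a + v a) = sum_list l u + sum_list l v.
Proof.
  induction l as [|a l IH]; [unfold sum_list; simpl; ring|].
  rewrite !sum_list_cons, IH. ring.
Qed.

Lemma sum_list_div l u c : sum_list l (fun a => u a / c) = sum_list l u / c.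
Proof.
  induction l as [|a l IH]; [unfold sum_list; simpl; unfold Rdiv; ring|].
  rewrite !sum_list_cons, IH. unfold Rdiv. ring.
Qed.

Lemma sum_list_le l u v : (forall a, In a l -> u a <= v a) -> sum_list l u <= sum_list l v.
Proof.
  induction l as [|a l IH]; intros H; [unfold sum_list; simpl; lra|].
  rewrite !sum_list_cons.
  assert (u a <= v a) by (apply H; left; reflexivity).
  assert (sum_list l u <= sum_list l v) by (apply IH; intros; apply H; right; assumption).
  lra.
Qed.

Lemma sum_list_nonneg l u : (forall a, In a l -> 0 <= u a) -> 0 <= sum_list l u.
Proof.
  intros H. rewrite <- (sum_list_zero l (fun _ => 0)) by reflexivity.
  apply sum_list_le. exact H.
Qed.

Lemma sum_list_le_term l u a :
  (forall b, In b l -> 0 <= u b) -> In a l -> u a <= sum_list l u.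
Proof.
  induction l as [|b l IH]; intros H Hin; [contradiction|].
  rewrite sum_list_cons. destruct Hin as [<-|Hin].
  - assert (0 <= sum_list l u) by (apply sum_list_nonneg; intros; apply H; right; assumption).
    lra.
  - assert (0 <= u b) by (apply H; left; reflexivity).
    assert (u a <= sum_list l u) by (apply IH; [intros; apply H; right|]; assumption).
    lra.
Qed.

Lemma sum_list_lipschitz l u v c :
  (forall a, In a l -> Rabs (u a - v a) <= c) ->
  Rabs (sum_list l u - sum_list l v) <= INR (length l) * c.
Proof.
  induction l as [|a l IH]; intros H.
  - unfold sum_list; simpl. rewrite Rminus_0_r, Rabs_R0. lra.
  - rewrite !sum_list_cons. simpl length. rewrite S_INR.
    replace (u a + sum_list l u - (v a + sum_list l v))
      with ((u a - v a) + (sum_list l u - sum_list l v)) by ring.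
    eapply Rle_trans; [apply Rabs_triang|].
    assert (Rabs (u a - v a) <= c) by (apply H; left; reflexivity).
    assert (Rabs (sum_list l u - sum_list l v) <= INR (length l) * c)
      by (apply IH; intros; apply H; right; assumption).
    lra.
Qed.

Lemma sum_list_neq0 l u : sum_list l u <> 0 -> exists a, In a l /\ u a <> 0.
Proof.
  intros H. apply NNPP. intros Hno. apply H, sum_list_zero.
  intros a Ha. apply NNPP. intros Hu. apply Hno. exists a. split; assumption.
Qed.

Lemma sum_list_indicator (eqA : forall a b : A, {a = b} + {a <> b}) l a c :
  NoDup l -> In a l -> sum_list l (fun b => if eqA a b then c else 0) = c.
Proof.
  induction l as [|b l IH]; intros Hnd Hin; [contradiction|].
  inversion Hnd as [|? ? Hb Hnd']; subst. rewrite sum_list_cons.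
  destruct (eqA a b) as [<-|Hab].
  - rewrite sum_list_zero; [ring|].
    intros b Hb'. destruct (eqA a b); [subst; contradiction|reflexivity].
  - destruct Hin as [->|Hin]; [contradiction|]. rewrite IH by assumption. ring.
Qed.

Lemma sum_list_by_label {B : Type} (eqA : forall a b : A, {a = b} + {a <> b})
  (label : B -> A) (w : B -> R) (J : list B) l :
  NoDup l -> (forall b, In b J -> In (label b) l) ->
  sum_list l (fun a => sum_list J (fun b => if eqA (label b) a then w b else 0)) = sum_list J w.
Proof.
  intros Hnd. induction J as [|b J IH]; intros HJ.
  - apply sum_list_zero. reflexivity.
  - transitivity (sum_list l (fun a => (if eqA (label b) a then w b else 0)
                    + sum_list J (fun b => if eqA (label b) a then w b else 0)));
      [reflexivity|].
    rewrite sum_list_plus, IH, sum_list_indicator.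
    + reflexivity.
    + exact Hnd.
    + apply HJ. left. reflexivity.
    + intros b' Hb'. apply HJ. right. exact Hb'.
Qed.

End SumList.

Lemma is_series_half_pow : is_series (fun k : nat => (/2)^(S k)) 1.
Proof.
  replace 1 with (/2 * / (1 - /2)) by field.
  apply (is_series_ext (fun k => /2 * (/2)^k)); [reflexivity|].
  assert (Hgeom : is_series (fun k => (/2)^k) (/ (1 - /2)))
    by (apply is_series_geom; rewrite Rabs_pos_eq; lra).
  exact (is_series_scal_l (/2) _ _ Hgeom).
Qed.

Lemma ex_series_le_half_pow (a : nat -> R) (B : R) :
  (forall k, 0 <= a k <= B * (/2)^(S k)) -> ex_series a.
Proof.
  intros H. apply (ex_series_le a (fun k => B * (/2)^(S k))).
  - intros n. unfold norm; simpl. unfold abs; simpl. rewrite Rabs_pos_eq; apply H.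
  - exists (B * 1). apply (is_series_scal_l B _ _ is_series_half_pow).
Qed.

Lemma Series_nonneg (a : nat -> R) : (forall n, 0 <= a n) -> ex_series a -> 0 <= Series a.
Proof.
  intros H Ha. replace 0 with (Series (fun _ => 0)).
  - apply Series_le; [|exact Ha]. intros n; split; [lra|apply H].
  - rewrite (Series_ext _ (fun n => 0 * a n)) by (intros; ring).
    rewrite Series_scal_l. ring.
Qed.

Lemma Series_ge_term (k : nat) (a : nat -> R) :
  (forall n, 0 <= a n) -> ex_series a -> a k <= Series a.
Proof.
  revert a. induction k as [|k IH]; intros a H Ha;
    rewrite (Series_incr_1 a Ha); apply ex_series_incr_1 in Ha.
  - assert (0 <= Series (fun n => a (S n))) by (apply Series_nonneg; auto). lra.
  - assert (a (S k) <= Series (fun n => a (S n))) by (apply (IH (fun n => a (S n))); auto).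
    specialize (H 0%nat). lra.
Qed.

Lemma Series_half_pow_le (N : nat) (e : nat -> R) (B eta : R) :
  (forall k, 0 <= e k <= B) -> (forall k, (k < N)%nat -> e k <= eta) -> 0 <= eta ->
  Series (fun k => (/2)^(S k) * e k) <= eta + B * (/2)^N.
Proof.
  revert e. induction N as [|N IH]; intros e He Heta Heta0.
  - rewrite pow_O, Rmult_1_r.
    assert (Series (fun k => (/2)^(S k) * e k) <= Series (fun k => B * (/2)^(S k))).
    { apply Series_le.
      - intros n. pose proof (pow_lt (/2) (S n)). destruct (He n).
        split; [apply Rmult_le_pos|rewrite (Rmult_comm B); apply Rmult_le_compat_l]; lra.
      - exists (B * 1). apply (is_series_scal_l B _ _ is_series_half_pow). }
    rewrite Series_scal_l, (is_series_unique _ _ is_series_half_pow) in H. lra.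
  - assert (Hex : ex_series (fun k => (/2)^(S k) * e k)).
    { apply (ex_series_le_half_pow _ B). intros k. pose proof (pow_lt (/2) (S k)).
      destruct (He k).
      split; [apply Rmult_le_pos|rewrite (Rmult_comm B); apply Rmult_le_compat_l]; lra. }
    rewrite (Series_incr_1 _ Hex).
    rewrite (Series_ext _ (fun k => /2 * ((/2)^(S k) * e (S k)))) by (intros; simpl; ring).
    rewrite Series_scal_l.
    assert (Series (fun k => (/2)^(S k) * e (S k)) <= eta + B * (/2)^N).
    { apply IH; auto. intros k Hk. apply Heta. lia. }
    assert (e 0%nat <= eta) by (apply Heta; lia).
    simpl in *. lra.
Qed.

Lemma half_pow_eventually_lt (C eps : R) :
  0 < eps -> exists N, forall n, (N <= n)%nat -> C * (/2)^n < eps.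
Proof.
  intros He. pose proof (Rabs_pos C).
  destruct (pow_lt_1_zero (/2)) with (y := eps / (Rabs C + 1)) as [N HN].
  { rewrite Rabs_pos_eq; lra. }
  { apply Rdiv_lt_0_compat; lra. }
  exists N. intros n Hn. specialize (HN n Hn).
  assert (Hp : 0 <= (/2)^n) by (apply pow_le; lra).
  rewrite Rabs_pos_eq in HN by exact Hp.
  assert (C * (/2)^n <= (Rabs C + 1) * (/2)^n)
    by (apply Rmult_le_compat_r; [exact Hp|]; pose proof (Rle_abs C); lra).
  assert ((Rabs C + 1) * (/2)^n < (Rabs C + 1) * (eps / (Rabs C + 1)))
    by (apply Rmult_lt_compat_l; lra).
  replace ((Rabs C + 1) * (eps / (Rabs C + 1))) with eps in * by (field; lra).
  lra.
Qed.

Lemma list_min_pos (l : list R) :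
  (forall r, In r l -> 0 < r) -> exists m, 0 < m /\ forall r, In r l -> m <= r.
Proof.
  induction l as [|a l IH]; intros H.
  - exists 1. split; [lra|]. intros r [].
  - destruct IH as [m [Hm Hml]]; [intros r Hr; apply H; right; exact Hr|].
    exists (Rmin a m). split; [apply Rmin_pos; [apply H; left|]; auto|].
    intros r [<-|Hr]; [apply Rmin_l|].
    eapply Rle_trans; [apply Rmin_r|]. apply Hml, Hr.
Qed.

Lemma eventually_forall_in_list {A : Type} (l : list A) (Q : A -> nat -> Prop) :
  (forall a, In a l -> exists K, forall k, (K <= k)%nat -> Q a k) ->
  exists K, forall a, In a l -> forall k, (K <= k)%nat -> Q a k.
Proof.
  induction l as [|a l IH]; intros H.
  - exists 0%nat. intros a [].
  - destruct IH as [K1 HK1]; [intros b Hb; apply H; right; exact Hb|].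
    destruct (H a (or_introl eq_refl)) as [K2 HK2].
    exists (max K1 K2). intros b [<-|Hb] k Hk.
    + apply HK2. lia.
    + apply HK1; [exact Hb|lia].
Qed.

Lemma exists_delta_forall_in_list {A B : Type} (dist : B -> R) (Q : A -> B -> Prop)
  (l : list A) :
  (forall a, In a l -> exists del, 0 < del /\ forall z, dist z < del -> Q a z) ->
  exists del, 0 < del /\ forall a, In a l -> forall z, dist z < del -> Q a z.
Proof.
  induction l as [|a l IH]; intros H.
  - exists 1. split; [lra|]. intros a [].
  - destruct IH as [del1 [Hdel1 H1]]; [intros b Hb; apply H; right; exact Hb|].
    destruct (H a (or_introl eq_refl)) as [del2 [Hdel2 H2]].
    exists (Rmin del1 del2). split; [apply Rmin_pos; assumption|].
    pose proof (Rmin_l del1 del2). pose proof (Rmin_r del1 del2).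
    intros b [<-|Hb] z Hz.
    + apply H2. lra.
    + apply H1; [exact Hb|lra].
Qed.

Lemma finite_representatives {B Y : Type} (L : list B) (Rel : B -> Y -> Prop) :
  exists P : list Y, forall b y, In b L -> Rel b y -> exists p, In p P /\ Rel b p.
Proof.
  induction L as [|b L [P HP]].
  - exists nil. intros b y [].
  - destruct (classic (exists y, Rel b y)) as [[y Hy]|Hno].
    + exists (y :: P). intros b' y' [<-|Hin] Hr.
      * exists y. split; [left; reflexivity|exact Hy].
      * destruct (HP b' y' Hin Hr) as [p [Hp Hrp]]. exists p. split; [right|]; assumption.
    + exists P. intros b' y' [<-|Hin] Hr.
      * exfalso. apply Hno. exists y'. exact Hr.
      * exact (HP b' y' Hin Hr).
Qed.

Lemma Rabs_ratio_sub_le (a b a' b' m c : R) :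
  0 <= a <= b -> 0 <= a' <= b' -> 0 < m -> m <= b -> m <= b' ->
  Rabs (a - a') <= c -> Rabs (b - b') <= c ->
  Rabs (a / b - a' / b') <= 2 * c / m.
Proof.
  intros [Ha Hab] [Ha' Hab'] Hm Hmb Hmb' Hc1 Hc2.
  replace (a / b - a' / b') with ((a - a') / b + (a' / b') * ((b' - b) / b)) by (field; lra).
  eapply Rle_trans; [apply Rabs_triang|]. unfold Rdiv. rewrite !Rabs_mult.
  rewrite Rabs_minus_sym in Hc2.
  assert (Hinv : 0 < / b <= / m) by (split; [apply Rinv_0_lt_compat|apply Rinv_le_contravar]; lra).
  rewrite (Rabs_pos_eq (/ b)), (Rabs_pos_eq a') by lra.
  rewrite (Rabs_pos_eq (/ b')) by (left; apply Rinv_0_lt_compat; lra).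
  assert (Hq : 0 <= a' * / b' <= 1).
  { split; [apply Rmult_le_pos; [lra|left; apply Rinv_0_lt_compat; lra]|].
    apply (Rmult_le_reg_r b'); [lra|]. field_simplify; lra. }
  assert (0 <= c) by (pose proof (Rabs_pos (a - a')); lra).
  assert (H1 : Rabs (a - a') * / b <= c * / m)
    by (apply Rmult_le_compat; try apply Rabs_pos; lra).
  assert (H2 : Rabs (b' - b) * / b <= c * / m)
    by (apply Rmult_le_compat; try apply Rabs_pos; lra).
  assert (H3 : a' * / b' * (Rabs (b' - b) * / b) <= Rabs (b' - b) * / b).
  { rewrite <- (Rmult_1_l (Rabs (b' - b) * / b)) at 2.
    apply Rmult_le_compat_r; [apply Rmult_le_pos; [apply Rabs_pos|lra]|lra]. }
  lra.
Qed.

Definition eq_dec_classical {A : Type} (a b : A) : {a = b} + {a <> b} :=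
  excluded_middle_informative (a = b).

Record ball (X I : Type) : Type := Ball { center : X; radius : R; label : I }.
Arguments Ball {X I}.
Arguments center {X I}.
Arguments radius {X I}.
Arguments label {X I}.

Section Pseudometric.
Context {X : Type} (dl : X -> X -> R).
Hypothesis dl_refl : forall x, dl x x = 0.
Hypothesis dl_sym : forall x y, dl x y = dl y x.
Hypothesis dl_triangle : forall x y z, dl x z <= dl x y + dl y z.

Lemma dl_nonneg x y : 0 <= dl x y.
Proof. pose proof (dl_triangle x y x). rewrite dl_refl, (dl_sym y x) in H. lra. Qed.

Lemma open_ball c r : open_in dl (fun y => dl c y < r).
Proof.
  intros y Hy. exists (r - dl c y). split; [lra|].
  intros z Hz. pose proof (dl_triangle c y z). lra.
Qed.

Definition converges_to (s : nat -> X) (c : X) : Prop :=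
  forall eps, 0 < eps -> exists K, forall k, (K <= k)%nat -> dl (s k) c < eps.

(* Completeness for sequences with a geometric Cauchy rate; every Cauchy sequence has
   such a subsequence, and this is the form produced and consumed below. *)
Definition geometrically_complete : Prop :=
  forall (s : nat -> X) (C : R),
    (forall k m, dl (s k) (s (k + m)%nat) <= C * (/2)^k) -> exists c, converges_to s c.

Definition totally_bounded : Prop :=
  forall eps, 0 < eps -> exists P : list X, forall y, exists p, In p P /\ dl p y < eps.

Lemma compact_bounded : compact_metric dl -> exists D, forall x y, dl x y <= D.
Proof.
  intros Hcpt. destruct (Hcpt X (fun c y => dl c y < 1)) as [l Hl].
  - intros c. apply open_ball.
  - intros x. exists x. rewrite dl_refl. lra.
  - exists (2 + sum_list l (fun a => sum_list l (fun b => dl a b))). intros x y.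
    destruct (Hl x) as [a [Ha Hxa]]. destruct (Hl y) as [b [Hb Hyb]].
    assert (dl a b <= sum_list l (fun b => dl a b))
      by (apply sum_list_le_term; [intros; apply dl_nonneg|exact Hb]).
    assert (sum_list l (fun b => dl a b) <= sum_list l (fun a => sum_list l (fun b => dl a b))).
    { apply (sum_list_le_term l (fun a => sum_list l (fun b => dl a b))); [|exact Ha].
      intros; apply sum_list_nonneg. intros; apply dl_nonneg. }
    pose proof (dl_triangle x a y). pose proof (dl_triangle a b y).
    rewrite (dl_sym a x) in Hxa. lra.
Qed.

(* Without a limit, each [y] is frequently at distance [e_y] from the sequence; once the
   sequence moves less than the least [e_y / 2] of a finite subcover by the balls
   [B(y, e_y / 2)], the ball containing it gives a contradiction. *)
Lemma compact_geometrically_complete : compact_metric dl -> geometrically_complete.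
Proof.
  intros Hcpt s C Hs. apply NNPP. intros Hno.
  assert (Hfar : forall y, exists e, 0 < e /\ forall N, exists k, (N <= k)%nat /\ e <= dl (s k) y).
  { intros y. apply NNPP. intros Hn. apply Hno. exists y. intros eps Heps.
    apply NNPP. intros HK. apply Hn. exists eps. split; [exact Heps|]. intros N.
    apply NNPP. intros Hk. apply HK. exists N. intros k Hkn.
    apply Rnot_le_lt. intros Hle. apply Hk. exists k. split; assumption. }
  set (V := {ye : X * R | 0 < snd ye /\
              forall N, exists k, (N <= k)%nat /\ snd ye <= dl (s k) (fst ye)}).
  destruct (Hcpt V (fun v y => dl (fst (proj1_sig v)) y < snd (proj1_sig v) / 2)) as [L HL].
  - intros v. apply open_ball.
  - intros y. destruct (Hfar y) as [e [He Hk]].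
    exists (exist _ (y, e) (conj He Hk)). simpl. rewrite dl_refl. lra.
  - destruct (list_min_pos (map (fun v : V => snd (proj1_sig v)) L)) as [m [Hm Hmin]].
    { intros r Hr. apply in_map_iff in Hr. destruct Hr as [v [E _]]. rewrite <- E.
      apply (proj1 (proj2_sig v)). }
    destruct (half_pow_eventually_lt C (m / 2)) as [N HN]; [lra|].
    destruct (HL (s N)) as [v [Hin Hv]].
    assert (Hmv : m <= snd (proj1_sig v))
      by (apply Hmin, (in_map (fun v : V => snd (proj1_sig v))), Hin).
    destruct v as [[y e] [He Hk]]. simpl in *.
    destruct (Hk N) as [k [Hkn Hek]].
    pose proof (Hs N (k - N)%nat) as HNk. replace (N + (k - N))%nat with k in HNk by lia.
    pose proof (HN N (le_n N)).
    pose proof (dl_triangle (s k) (s N) y) as Htri.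
    rewrite (dl_sym (s k) (s N)), (dl_sym (s N) y) in Htri. lra.
Qed.

Section HeineBorel.
Context {I : Type} (U : I -> X -> Prop).

Definition finitely_covered (c : X) (r : R) : Prop :=
  exists l : list I, forall x, dl c x < r -> exists i, In i l /\ U i x.

Lemma finitely_covered_net (P : list X) (s : R) (A : X -> Prop) :
  (forall p, In p P -> A p -> finitely_covered p s) ->
  exists l : list I, forall p x, In p P -> A p -> dl p x < s -> exists i, In i l /\ U i x.
Proof.
  induction P as [|p P IH]; intros H.
  - exists nil. intros p x [].
  - destruct IH as [l Hl]; [intros q Hq; apply H; right; exact Hq|].
    destruct (classic (A p)) as [Hp|Hp].
    + destruct (H p (or_introl eq_refl) Hp) as [l' Hl'].
      exists (l' ++ l). intros q x [<-|Hq] Hqa Hx.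
      * destruct (Hl' x Hx) as [i [Hi Hu]]. exists i. split; [apply in_or_app; left|]; assumption.
      * destruct (Hl q x Hq Hqa Hx) as [i [Hi Hu]].
        exists i. split; [apply in_or_app; right|]; assumption.
    + exists l. intros q x [<-|Hq] Hqa Hx; [contradiction|exact (Hl q x Hq Hqa Hx)].
Qed.

Hypothesis dl_totally_bounded : totally_bounded.

Lemma not_finitely_covered_unit :
  ~ (exists l : list I, forall x, exists i, In i l /\ U i x) ->
  exists c, ~ finitely_covered c 1.
Proof.
  intros Hno. destruct (dl_totally_bounded 1) as [P HP]; [lra|].
  apply NNPP. intros Hn. apply Hno.
  destruct (finitely_covered_net P 1 (fun _ => True)) as [l Hl].
  { intros p _ _. apply NNPP. intros Hnc. apply Hn. exists p. exact Hnc. }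
  exists l. intros x. destruct (HP x) as [p [Hin Hpx]]. exact (Hl p x Hin Logic.I Hpx).
Qed.

(* Cover the ball of radius [r] by balls of radius [r/2] centred at an [r/2]-net. *)
Lemma not_finitely_covered_halve c r :
  0 < r -> ~ finitely_covered c r ->
  exists c', dl c c' < 3/2 * r /\ ~ finitely_covered c' (r/2).
Proof.
  intros Hr Hbad. apply NNPP. intros Hno. apply Hbad.
  destruct (dl_totally_bounded (r/2)) as [P HP]; [lra|].
  destruct (finitely_covered_net P (r/2) (fun p => dl c p < 3/2 * r)) as [l Hl].
  { intros p _ Hp. apply NNPP. intros Hnc. apply Hno. exists p. split; assumption. }
  exists l. intros x Hx. destruct (HP x) as [p [Hin Hpx]].
  apply (Hl p x Hin); [|exact Hpx].
  pose proof (dl_triangle c x p). rewrite (dl_sym x p) in *. lra.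
Qed.

Lemma not_finitely_covered_sequence c0 :
  ~ finitely_covered c0 1 ->
  exists cs : nat -> X, (forall k, ~ finitely_covered (cs k) ((/2)^k)) /\
                        (forall k m, dl (cs k) (cs (k + m)%nat) <= 3 * (/2)^k).
Proof.
  intros Hc0.
  destruct (functional_choice (fun (cr : X * R) c' =>
      0 < snd cr -> ~ finitely_covered (fst cr) (snd cr) ->
      dl (fst cr) c' < 3/2 * snd cr /\ ~ finitely_covered c' (snd cr / 2))) as [h Hh].
  { intros [c r]. simpl. destruct (classic (0 < r /\ ~ finitely_covered c r)) as [[Hr Hb]|Hn].
    - destruct (not_finitely_covered_halve c r Hr Hb) as [c' Hc']. exists c'. auto.
    - exists c. intros Hr Hb. exfalso. apply Hn. split; assumption. }
  set (state := fun k => Nat.iter k (fun cr => (h cr, snd cr / 2)) (c0, 1)).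
  assert (Hrad : forall k, snd (state k) = (/2)^k).
  { induction k as [|k IH]; [reflexivity|]. simpl in *. rewrite IH. lra. }
  assert (Hbad : forall k, ~ finitely_covered (fst (state k)) ((/2)^k)).
  { induction k as [|k IH]; [exact Hc0|].
    rewrite <- Hrad. simpl. rewrite <- Hrad in IH.
    apply Hh; [rewrite Hrad; apply pow_lt; lra|exact IH]. }
  assert (Hstep : forall k, dl (fst (state k)) (fst (state (S k))) < 3/2 * (/2)^k).
  { intros k. rewrite <- Hrad. apply Hh; [rewrite Hrad; apply pow_lt; lra|].
    rewrite Hrad. apply Hbad. }
  exists (fun k => fst (state k)). split; [exact Hbad|].
  assert (Hgeom : forall k m, dl (fst (state k)) (fst (state (k + m)%nat))
                              <= 3 * (/2)^k * (1 - (/2)^m)).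
  { intros k m. induction m as [|m IH].
    - rewrite Nat.add_0_r, dl_refl. simpl. lra.
    - pose proof (dl_triangle (fst (state k)) (fst (state (k + m)%nat))
                    (fst (state (k + S m)%nat))).
      replace (k + S m)%nat with (S (k + m)) in * by lia.
      pose proof (Hstep (k + m)%nat) as Hs. rewrite pow_add in Hs. simpl in *. lra. }
  intros k m. pose proof (Hgeom k m). pose proof (pow_le (/2) m). pose proof (pow_le (/2) k).
  nra.
Qed.

Hypothesis dl_complete : geometrically_complete.

(* The centres of ever smaller balls admitting no finite subcover converge to a
   point, one of whose open neighbourhoods already contains such a ball. *)
Lemma totally_bounded_complete_finite_subcover :
  (forall i, open_in dl (U i)) -> (forall x, exists i, U i x) ->
  exists l : list I, forall x, exists i, In i l /\ U i x.
Proof.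
  intros Hopen Hcov. apply NNPP. intros Hno.
  destruct (not_finitely_covered_unit Hno) as [c0 Hc0].
  destruct (not_finitely_covered_sequence c0 Hc0) as [cs [Hbad Hcauchy]].
  destruct (dl_complete cs 3 Hcauchy) as [c Hc].
  destruct (Hcov c) as [i Hi]. destruct (Hopen i c Hi) as [eps [He Hball]].
  destruct (Hc (eps/2)) as [K HK]; [lra|].
  destruct (half_pow_eventually_lt 1 (eps/2)) as [N HN]; [lra|].
  apply (Hbad (max K N)). exists (i :: nil). intros x Hx.
  exists i. split; [left; reflexivity|]. apply Hball.
  pose proof (HK (max K N) (Nat.le_max_l K N)). pose proof (HN (max K N) (Nat.le_max_r K N)).
  pose proof (dl_triangle c (cs (max K N)) x). rewrite (dl_sym c (cs (max K N))) in *. lra.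
Qed.

End HeineBorel.

Lemma totally_bounded_complete_compact :
  totally_bounded -> geometrically_complete -> compact_metric dl.
Proof.
  intros Htb Hcomplete I U. exact (totally_bounded_complete_finite_subcover U Htb Hcomplete).
Qed.

Lemma compact_uniform_oscillation {A Y : Type} (dY : Y -> Y -> R) (g : A -> X -> Y)
  (js : list A) (eta : R) :
  compact_metric dl -> (forall j, In j js -> continuous_metric dl dY (g j)) -> 0 < eta ->
  exists L : list (X * R),
    (forall c r z j, In (c, r) L -> dl c z < r -> In j js -> dY (g j c) (g j z) < eta) /\
    (forall z, exists c r, In (c, r) L /\ dl c z < r).
Proof.
  intros Hcpt Hg Heta.
  set (V := {cr : X * R | forall z j, dl (fst cr) z < snd cr -> In j js ->
                                      dY (g j (fst cr)) (g j z) < eta}).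
  destruct (Hcpt V (fun v z => dl (fst (proj1_sig v)) z < snd (proj1_sig v))) as [L HL].
  - intros v. apply open_ball.
  - intros c.
    destruct (exists_delta_forall_in_list (fun z => dl c z)
                (fun j z => dY (g j c) (g j z) < eta) js) as [del [Hdel Hd]].
    { intros j Hj. exact (Hg j Hj c eta Heta). }
    assert (Hv : forall z j, dl (fst (c, del)) z < snd (c, del) -> In j js ->
                             dY (g j (fst (c, del))) (g j z) < eta).
    { intros z j Hz Hj. exact (Hd j Hj z Hz). }
    exists (exist _ (c, del) Hv). simpl. rewrite dl_refl. exact Hdel.
  - exists (map (@proj1_sig _ _) L). split.
    + intros c r z j Hin Hz Hj. apply in_map_iff in Hin.
      destruct Hin as [[cr Hcr] [E _]]. simpl in E. subst cr. exact (Hcr z j Hz Hj).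
    + intros z. destruct (HL z) as [v [Hin Hz]]. exists (fst (proj1_sig v)), (snd (proj1_sig v)).
      split; [|exact Hz]. rewrite <- surjective_pairing. apply in_map, Hin.
Qed.

Lemma lipschitz_continuous (g : X -> R) (L : R) :
  0 <= L -> (forall x y, Rabs (g x - g y) <= L * dl x y) ->
  continuous_metric dl (fun a b => Rabs (a - b)) g.
Proof.
  intros HL0 HL x eps He. exists (eps / (L + 1)). split; [apply Rdiv_lt_0_compat; lra|].
  intros y Hy. eapply Rle_lt_trans; [apply HL|].
  apply Rle_lt_trans with (L * (eps / (L + 1))).
  - apply Rmult_le_compat_l; lra.
  - apply (Rmult_lt_reg_r (L + 1)); [lra|]. field_simplify; lra.
Qed.

Section BallPartition.
Context {I : Type} (U : I -> X -> Prop).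

Definition bump (p : X) (r : R) (y : X) : R := Rmax 0 (2 * r - dl p y).

Lemma bump_nonneg p r y : 0 <= bump p r y.
Proof. apply Rmax_l. Qed.

Lemma bump_lipschitz p r x y : Rabs (bump p r x - bump p r y) <= dl x y.
Proof.
  pose proof (dl_triangle p x y) as H1. pose proof (dl_triangle p y x) as H2.
  rewrite (dl_sym y x) in H2.
  unfold bump, Rmax. destruct (Rle_dec 0 (2 * r - dl p x)), (Rle_dec 0 (2 * r - dl p y));
    apply Rabs_le; lra.
Qed.

Lemma bump_ge_radius p r y : dl p y < r -> r <= bump p r y.
Proof. intros H. unfold bump. eapply Rle_trans; [|apply Rmax_r]. lra. Qed.

Lemma bump_neq0 p r y : bump p r y <> 0 -> dl p y < 2 * r.
Proof.
  intros Hn. apply Rnot_le_lt. intros Hle. apply Hn.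
  unfold bump, Rmax. destruct (Rle_dec 0 (2 * r - dl p y)); lra.
Qed.

Section FromBalls.
Variable J : list (ball X I).
Hypothesis J_subordinate :
  forall b, In b J -> forall z, dl (center b) z < 3 * radius b -> U (label b) z.
Hypothesis J_cover : forall x, exists b, In b J /\ dl (center b) x < radius b.
Variable m : R.
Hypothesis m_pos : 0 < m.
Hypothesis m_le_radius : forall b, In b J -> m <= radius b.

Definition ball_bump (b : ball X I) : X -> R := bump (center b) (radius b).

Definition bump_sum (y : X) : R := sum_list J (fun b => ball_bump b y).

Definition label_bump_sum (i : I) (y : X) : R :=
  sum_list J (fun b => if eq_dec_classical (label b) i then ball_bump b y else 0).

Definition ball_partition (i : I) (y : X) : R := label_bump_sum i y / bump_sum y.

Lemma bump_sum_ge y : m <= bump_sum y.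
Proof.
  destruct (J_cover y) as [b [Hb Hy]]. apply Rle_trans with (ball_bump b y).
  - apply Rle_trans with (radius b); [apply m_le_radius, Hb|apply bump_ge_radius, Hy].
  - apply (sum_list_le_term J (fun b => ball_bump b y)); [intros; apply bump_nonneg|exact Hb].
Qed.

Lemma label_bump_sum_bounds i y : 0 <= label_bump_sum i y <= bump_sum y.
Proof.
  split.
  - apply sum_list_nonneg. intros b _. destruct eq_dec_classical; [apply bump_nonneg|lra].
  - apply sum_list_le. intros b _. destruct eq_dec_classical; [lra|apply bump_nonneg].
Qed.

Lemma ball_partition_nonneg i y : 0 <= ball_partition i y.
Proof.
  pose proof (bump_sum_ge y). apply Rmult_le_pos; [apply label_bump_sum_bounds|].
  left. apply Rinv_0_lt_compat. lra.
Qed.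

(* Within distance [m] of the support of [ball_partition i] lies only the triple ball
   of some [b] labelled [i]: [2 * radius b + m <= 3 * radius b]. *)
Lemma ball_partition_support i x :
  (forall eps, 0 < eps -> exists z, dl x z < eps /\ ball_partition i z <> 0) -> U i x.
Proof.
  intros Hcl. destruct (Hcl m m_pos) as [z [Hxz Hz]].
  assert (Hlz : label_bump_sum i z <> 0).
  { intros E. apply Hz. unfold ball_partition. rewrite E. unfold Rdiv. ring. }
  destruct (sum_list_neq0 _ _ Hlz) as [b [Hb Hbz]].
  destruct (eq_dec_classical (label b) i) as [<-|]; [|contradiction].
  apply J_subordinate; [exact Hb|].
  pose proof (bump_neq0 _ _ _ Hbz). pose proof (m_le_radius b Hb).
  pose proof (dl_triangle (center b) z x) as Htri. rewrite (dl_sym z x) in Htri. lra.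
Qed.

Lemma ball_partition_sum x :
  sum_list (nodup eq_dec_classical (map label J)) (fun i => ball_partition i x) = 1.
Proof.
  unfold ball_partition. rewrite sum_list_div. unfold label_bump_sum.
  rewrite sum_list_by_label.
  - fold (bump_sum x). pose proof (bump_sum_ge x). field. lra.
  - apply NoDup_nodup.
  - intros b Hb. apply nodup_In, in_map, Hb.
Qed.

Lemma ball_partition_unlabelled i y :
  ~ In i (nodup eq_dec_classical (map label J)) -> ball_partition i y = 0.
Proof.
  intros Hi. unfold ball_partition. replace (label_bump_sum i y) with 0; [unfold Rdiv; ring|].
  symmetry. apply sum_list_zero. intros b Hb.
  destruct (eq_dec_classical (label b) i) as [<-|]; [|reflexivity].
  exfalso. apply Hi, nodup_In, in_map, Hb.
Qed.

Lemma ball_partition_of_unity : partition_of_unity_subordinate dl U ball_partition.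
Proof.
  split; [exact ball_partition_nonneg|split; [exact ball_partition_support|]].
  intros x. exists 1. split; [lra|].
  exists (nodup eq_dec_classical (map label J)). split; [apply NoDup_nodup|split].
  - intros i y Hi _. apply ball_partition_unlabelled, Hi.
  - apply ball_partition_sum.
Qed.

Lemma ball_partition_lipschitz i x y :
  Rabs (ball_partition i x - ball_partition i y) <= 2 * INR (length J) / m * dl x y.
Proof.
  unfold ball_partition.
  replace (2 * INR (length J) / m * dl x y)
    with (2 * (INR (length J) * dl x y) / m) by (field; lra).
  apply Rabs_ratio_sub_le;
    [apply label_bump_sum_bounds|apply label_bump_sum_bounds|exact m_pos
    |apply bump_sum_ge|apply bump_sum_ge| |].
  - apply sum_list_lipschitz. intros b _. destruct eq_dec_classical; [apply bump_lipschitz|].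
    rewrite Rminus_0_r, Rabs_R0. apply dl_nonneg.
  - apply sum_list_lipschitz. intros b _. apply bump_lipschitz.
Qed.

End FromBalls.

Lemma finite_ball_refinement :
  compact_metric dl -> (forall i, open_in dl (U i)) -> (forall x, exists i, U i x) ->
  exists J : list (ball X I),
    (forall b, In b J -> 0 < radius b /\
                         forall z, dl (center b) z < 3 * radius b -> U (label b) z) /\
    (forall x, exists b, In b J /\ dl (center b) x < radius b).
Proof.
  intros Hcpt Hopen Hcov.
  set (V := {b : ball X I | 0 < radius b /\
                            forall z, dl (center b) z < 3 * radius b -> U (label b) z}).
  destruct (Hcpt V (fun v y => dl (center (proj1_sig v)) y < radius (proj1_sig v)))
    as [L HL].
  - intros v. apply open_ball.
  - intros x. destruct (Hcov x) as [i Hi]. destruct (Hopen i x Hi) as [eps [He Hball]].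
    assert (Hv : 0 < radius (Ball x (eps / 3) i) /\
                 forall z, dl (center (Ball x (eps / 3) i)) z < 3 * radius (Ball x (eps / 3) i) ->
                           U (label (Ball x (eps / 3) i)) z).
    { simpl. split; [lra|]. intros z Hz. apply Hball. lra. }
    exists (exist _ (Ball x (eps / 3) i) Hv : V). simpl. rewrite dl_refl. lra.
  - exists (map (@proj1_sig _ _) L). split.
    + intros b Hb. apply in_map_iff in Hb. destruct Hb as [v [E _]]. rewrite <- E.
      exact (proj2_sig v).
    + intros x. destruct (HL x) as [v [Hin Hx]].
      exists (proj1_sig v). split; [apply in_map, Hin|exact Hx].
Qed.

Lemma lipschitz_partition_of_unity :
  compact_metric dl -> (forall i, open_in dl (U i)) -> (forall x, exists i, U i x) ->
  exists rho : I -> X -> R, partition_of_unity_subordinate dl U rho /\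
    exists L, 0 <= L /\ forall i x y, Rabs (rho i x - rho i y) <= L * dl x y.
Proof.
  intros Hcpt Hopen Hcov.
  destruct (finite_ball_refinement Hcpt Hopen Hcov) as [J [HJ Hcover]].
  destruct (list_min_pos (map radius J)) as [m [Hm Hmin]].
  { intros r Hr. apply in_map_iff in Hr. destruct Hr as [b [E Hb]]. rewrite <- E.
    apply (HJ b Hb). }
  assert (Hmr : forall b, In b J -> m <= radius b) by (intros b Hb; apply Hmin, in_map, Hb).
  assert (HJsub := fun b Hb => proj2 (HJ b Hb)).
  exists (ball_partition J). split.
  - exact (ball_partition_of_unity J HJsub Hcover m Hm Hmr).
  - exists (2 * INR (length J) / m). split.
    + apply Rmult_le_pos; [pose proof (pos_INR (length J)); lra|].
      left. apply Rinv_0_lt_compat, Hm.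
    + intros i x y. exact (ball_partition_lipschitz J Hcover m Hm Hmr i x y).
Qed.

End BallPartition.

End Pseudometric.

Section OrbitSpace.
Context {M : Type} (d : M -> M -> R) (f : M -> M).
Hypothesis Hd : is_metric d.

Let d_refl : forall a, d a a = 0.
Proof. intros a. apply Hd. reflexivity. Qed.
Let d_sym : forall a b, d a b = d b a.
Proof. apply Hd. Qed.
Let d_triangle : forall a b c, d a c <= d a b + d b c.
Proof. apply Hd. Qed.
Let d_nonneg : forall a b, 0 <= d a b.
Proof. apply Hd. Qed.

Lemma orbit_iter (x : orbit_space f) (a : Z) (j : nat) :
  x (a + Z.of_nat j)%Z = Nat.iter j f (x a).
Proof.
  induction j as [|j IH].
  - simpl. f_equal. lia.
  - rewrite Nat.iter_succ, <- IH, (orbP f x). f_equal. lia.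
Qed.

Definition d_pair (x y : orbit_space f) (k : nat) : R :=
  d (x (Z.of_nat (S k))) (y (Z.of_nat (S k))) +
  d (x (- Z.of_nat (S k))%Z) (y (- Z.of_nat (S k))%Z).

Lemma d_one_d_pair (x y : orbit_space f) :
  d_one d f x y = d (x 0%Z) (y 0%Z) + Series (fun k => (/2)^(S k) * d_pair x y k).
Proof. reflexivity. Qed.

Lemma d_pair_nonneg (x y : orbit_space f) k : 0 <= d_pair x y k.
Proof. unfold d_pair. pose proof (d_nonneg (x (Z.of_nat (S k))) (y (Z.of_nat (S k)))).
  pose proof (d_nonneg (x (- Z.of_nat (S k))%Z) (y (- Z.of_nat (S k))%Z)). lra. Qed.

Lemma d_pair_triangle (x y z : orbit_space f) k : d_pair x z k <= d_pair x y k + d_pair y z k.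
Proof.
  unfold d_pair.
  pose proof (d_triangle (x (Z.of_nat (S k))) (y (Z.of_nat (S k))) (z (Z.of_nat (S k)))).
  pose proof (d_triangle (x (- Z.of_nat (S k))%Z) (y (- Z.of_nat (S k))%Z)
                (z (- Z.of_nat (S k))%Z)).
  lra.
Qed.

Lemma d_one_refl (x : orbit_space f) : d_one d f x x = 0.
Proof.
  rewrite d_one_d_pair, (Series_ext _ (fun k => 0 * 0))
    by (intros; unfold d_pair; rewrite !d_refl; ring).
  rewrite Series_scal_l, d_refl. ring.
Qed.

Lemma d_one_sym (x y : orbit_space f) : d_one d f x y = d_one d f y x.
Proof.
  rewrite !d_one_d_pair, (Series_ext _ (fun k => (/2)^(S k) * d_pair y x k)).
  - rewrite d_sym. reflexivity.
  - intros k. unfold d_pair. rewrite (d_sym (x _)), (d_sym (x (- _)%Z)). reflexivity.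
Qed.

Variable D : R.
Hypothesis d_le_D : forall a b, d a b <= D.

Lemma ex_series_d_pair (x y : orbit_space f) : ex_series (fun k => (/2)^(S k) * d_pair x y k).
Proof.
  apply (ex_series_le_half_pow _ (2 * D)). intros k. pose proof (pow_lt (/2) (S k)).
  pose proof (d_pair_nonneg x y k).
  assert (d_pair x y k <= 2 * D).
  { unfold d_pair. pose proof (d_le_D (x (Z.of_nat (S k))) (y (Z.of_nat (S k)))).
    pose proof (d_le_D (x (- Z.of_nat (S k))%Z) (y (- Z.of_nat (S k))%Z)). lra. }
  split; [apply Rmult_le_pos|rewrite (Rmult_comm (2 * D)); apply Rmult_le_compat_l]; lra.
Qed.

Lemma d_one_triangle (x y z : orbit_space f) : d_one d f x z <= d_one d f x y + d_one d f y z.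
Proof.
  rewrite !d_one_d_pair.
  assert (Series (fun k => (/2)^(S k) * d_pair x z k) <=
          Series (fun k => (/2)^(S k) * d_pair x y k) +
          Series (fun k => (/2)^(S k) * d_pair y z k)).
  { rewrite <- Series_plus by apply ex_series_d_pair.
    apply Series_le.
    - intros k. pose proof (pow_le (/2) (S k)). pose proof (d_pair_nonneg x z k).
      pose proof (d_pair_triangle x y z k). rewrite <- Rmult_plus_distr_l.
      split; [apply Rmult_le_pos|apply Rmult_le_compat_l]; lra.
    - apply (ex_series_plus (fun k => (/2)^(S k) * d_pair x y k)); apply ex_series_d_pair. }
  pose proof (d_triangle (x 0%Z) (y 0%Z) (z 0%Z)). lra.
Qed.

Lemma d_pair_le_d_one (x y : orbit_space f) k : d_pair x y k <= 2^(S k) * d_one d f x y.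
Proof.
  assert (Hk : (/2)^(S k) * d_pair x y k <= Series (fun k => (/2)^(S k) * d_pair x y k)).
  { apply (Series_ge_term k (fun k => (/2)^(S k) * d_pair x y k)); [|apply ex_series_d_pair].
    intros n. apply Rmult_le_pos; [apply pow_le; lra|apply d_pair_nonneg]. }
  assert (Hinv : 2^(S k) * (/2)^(S k) = 1) by (rewrite pow_inv; field; apply pow_nonzero; lra).
  pose proof (pow_lt 2 (S k)). pose proof (d_nonneg (x 0%Z) (y 0%Z)).
  rewrite d_one_d_pair, <- (Rmult_1_l (d_pair x y k)), <- Hinv, Rmult_assoc.
  apply Rmult_le_compat_l; lra.
Qed.

Lemma d_coord_le_d_one (x y : orbit_space f) n : d (x n) (y n) <= 2 ^ Z.abs_nat n * d_one d f x y.
Proof.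
  destruct (Z.eq_dec n 0) as [->|Hn].
  - rewrite pow_O, Rmult_1_l, d_one_d_pair.
    assert (0 <= Series (fun k => (/2)^(S k) * d_pair x y k)); [|lra].
    apply Series_nonneg; [|apply ex_series_d_pair].
    intros k. apply Rmult_le_pos; [apply pow_le; lra|apply d_pair_nonneg].
  - set (k := (Z.abs_nat n - 1)%nat). replace (Z.abs_nat n) with (S k) by (unfold k; lia).
    pose proof (d_pair_le_d_one x y k) as Hk. unfold d_pair in Hk.
    pose proof (d_nonneg (x (Z.of_nat (S k))) (y (Z.of_nat (S k)))).
    pose proof (d_nonneg (x (- Z.of_nat (S k))%Z) (y (- Z.of_nat (S k))%Z)).
    assert (Hnk : n = Z.of_nat (S k) \/ n = (- Z.of_nat (S k))%Z) by (unfold k; lia).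
    destruct Hnk as [E|E]; rewrite E; lra.
Qed.

Lemma d_one_lt_window (x y : orbit_space f) (N : nat) (eta : R) :
  (forall j, (j <= 2 * N)%nat ->
     d (x (- Z.of_nat N + Z.of_nat j)%Z) (y (- Z.of_nat N + Z.of_nat j)%Z) < eta) ->
  d_one d f x y < 3 * eta + 2 * D * (/2)^N.
Proof.
  intros H. rewrite d_one_d_pair.
  assert (H0 : d (x 0%Z) (y 0%Z) < eta).
  { replace 0%Z with (- Z.of_nat N + Z.of_nat N)%Z by lia. apply H. lia. }
  pose proof (d_nonneg (x 0%Z) (y 0%Z)).
  assert (Series (fun k => (/2)^(S k) * d_pair x y k) <= 2 * eta + (2 * D) * (/2)^N); [|lra].
  apply Series_half_pow_le; [|intros k Hk|lra].
  - intros k. split; [apply d_pair_nonneg|]. unfold d_pair.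
    pose proof (d_le_D (x (Z.of_nat (S k))) (y (Z.of_nat (S k)))).
    pose proof (d_le_D (x (- Z.of_nat (S k))%Z) (y (- Z.of_nat (S k))%Z)). lra.
  - unfold d_pair.
    assert (d (x (Z.of_nat (S k))) (y (Z.of_nat (S k))) < eta).
    { replace (Z.of_nat (S k)) with (- Z.of_nat N + Z.of_nat (N + S k))%Z by lia.
      apply H. lia. }
    assert (d (x (- Z.of_nat (S k))%Z) (y (- Z.of_nat (S k))%Z) < eta).
    { replace (- Z.of_nat (S k))%Z with (- Z.of_nat N + Z.of_nat (N - S k))%Z by lia.
      apply H. lia. }
    lra.
Qed.

Lemma d_coord_le_d_infty (x y : orbit_space f) n : d (x n) (y n) <= d_infty d f x y.
Proof.
  unfold d_infty. set (E := fun r => exists n : Z, r = d (x n) (y n)).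
  destruct (Lub_Rbar_correct E) as [Hub Hlub].
  assert (H1 : Rbar_le (d (x n) (y n)) (Lub_Rbar E)) by (apply Hub; exists n; reflexivity).
  assert (H2 : Rbar_le (Lub_Rbar E) D) by (apply Hlub; intros r [m Hr]; rewrite Hr; apply d_le_D).
  destruct (Lub_Rbar E); simpl in *; tauto.
Qed.

Lemma d_one_le_d_infty (x y : orbit_space f) : d_one d f x y <= 3 * d_infty d f x y.
Proof.
  rewrite d_one_d_pair. pose proof (d_coord_le_d_infty x y 0).
  assert (Series (fun k => (/2)^(S k) * d_pair x y k) <= 0 + 2 * d_infty d f x y * (/2)^0).
  { apply Series_half_pow_le; [|intros k Hk; lia|lra].
    intros k. split; [apply d_pair_nonneg|]. unfold d_pair.
    pose proof (d_coord_le_d_infty x y (Z.of_nat (S k))).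
    pose proof (d_coord_le_d_infty x y (- Z.of_nat (S k))). lra. }
  simpl in *. lra.
Qed.

Hypothesis Hcpt : compact_metric d.
Hypothesis Hf : continuous_metric d d f.

Lemma continuous_iter j : continuous_metric d d (Nat.iter j f).
Proof.
  induction j as [|j IH]; intros a eps He.
  - exists eps. split; [exact He|]. intros b Hb. exact Hb.
  - destruct (Hf (Nat.iter j f a) eps He) as [del1 [Hdel1 H1]].
    destruct (IH a del1 Hdel1) as [del2 [Hdel2 H2]].
    exists del2. split; [exact Hdel2|]. intros b Hb. rewrite !Nat.iter_succ. apply H1, H2, Hb.
Qed.

Lemma coordinate_limits_orbit (s : nat -> orbit_space f) (g : Z -> M) :
  (forall n, converges_to d (fun k => s k n) (g n)) -> forall n, f (g n) = g (n + 1)%Z.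
Proof.
  intros Hg n. apply Hd.
  set (e := d (f (g n)) (g (n + 1)%Z)).
  apply Rle_antisym; [|apply d_nonneg]. apply Rnot_lt_le. intros He.
  destruct (Hf (g n) (e / 2)) as [del [Hdel Hdf]]; [lra|].
  destruct (Hg n del Hdel) as [K1 HK1]. destruct (Hg (n + 1)%Z (e / 2)) as [K2 HK2]; [lra|].
  set (k := max K1 K2).
  pose proof (HK1 k (Nat.le_max_l _ _)) as H1. pose proof (HK2 k (Nat.le_max_r _ _)) as H2.
  rewrite d_sym in H1. pose proof (Hdf _ H1) as H3. rewrite (orbP f (s k) n) in H3.
  pose proof (d_triangle (f (g n)) (s k (n + 1)%Z) (g (n + 1)%Z)). unfold e in *. lra.
Qed.

Lemma d_one_geometrically_complete : geometrically_complete (d_one d f).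
Proof.
  intros s C Hs.
  assert (Hc : forall n, exists c, converges_to d (fun k => s k n) c).
  { intros n. apply (compact_geometrically_complete d d_refl d_sym d_triangle Hcpt _
                       (2 ^ Z.abs_nat n * C)).
    intros k m. eapply Rle_trans; [apply d_coord_le_d_one|]. rewrite Rmult_assoc.
    apply Rmult_le_compat_l; [apply pow_le; lra|apply Hs]. }
  destruct (functional_choice _ Hc) as [g Hg].
  exists (mkOrbit M f g (coordinate_limits_orbit s g Hg)). intros eps He.
  destruct (half_pow_eventually_lt (2 * D) (eps / 2)) as [N HN]; [lra|].
  destruct (eventually_forall_in_list (seq 0 (S (2 * N))) (fun j k =>
      d (s k (- Z.of_nat N + Z.of_nat j)%Z) (g (- Z.of_nat N + Z.of_nat j)%Z) < eps / 6))
    as [K HK].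
  { intros j _. apply Hg. lra. }
  exists K. intros k Hk.
  assert (d_one d f (s k) (mkOrbit M f g (coordinate_limits_orbit s g Hg))
          < 3 * (eps / 6) + 2 * D * (/2)^N).
  { apply d_one_lt_window. intros j Hj. apply HK; [apply in_seq; lia|exact Hk]. }
  pose proof (HN N (le_n N)). lra.
Qed.

Lemma d_one_totally_bounded : totally_bounded (d_one d f).
Proof.
  intros eps He.
  destruct (half_pow_eventually_lt (2 * D) (eps / 2)) as [N HN]; [lra|].
  destruct (compact_uniform_oscillation d d_refl d_triangle d (fun j => Nat.iter j f)
              (seq 0 (S (2 * N))) (eps / 12) Hcpt) as [L [Hosc HL]].
  { intros j _. apply continuous_iter. }
  { lra. }
  destruct (finite_representatives L
              (fun cr (p : orbit_space f) => d (fst cr) (p (- Z.of_nat N)%Z) < snd cr)) as [P HP].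
  exists P. intros y. destruct (HL (y (- Z.of_nat N)%Z)) as [c [r [Hin Hy]]].
  destruct (HP (c, r) y Hin Hy) as [p [Hp Hpr]]. simpl in Hpr.
  exists p. split; [exact Hp|].
  assert (d_one d f p y < 3 * (eps / 6) + 2 * D * (/2)^N).
  { apply d_one_lt_window. intros j Hj. rewrite !orbit_iter.
    assert (Hj' : In j (seq 0 (S (2 * N)))) by (apply in_seq; lia).
    pose proof (Hosc c r _ j Hin Hpr Hj'). pose proof (Hosc c r _ j Hin Hy Hj').
    pose proof (d_triangle (Nat.iter j f (p (- Z.of_nat N)%Z)) (Nat.iter j f c)
                  (Nat.iter j f (y (- Z.of_nat N)%Z))) as Htri.
    rewrite (d_sym _ (Nat.iter j f c)) in Htri. lra. }
  pose proof (HN N (le_n N)). lra.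
Qed.

Lemma d_one_compact : compact_metric (d_one d f).
Proof.
  apply (totally_bounded_complete_compact (d_one d f) d_one_refl d_one_sym d_one_triangle).
  - apply d_one_totally_bounded.
  - apply d_one_geometrically_complete.
Qed.

End OrbitSpace.

Theorem corollary2 (M : Type) (d : M -> M -> R) (f : M -> M)
  (Hd : is_metric d) (Hcpt : compact_metric d) (Hf : continuous_metric d d f)
  (I : Type) (U : I -> orbit_space f -> Prop)
  (HUopen : forall i, open_in (d_one d f) (U i))
  (HUcover : forall x, exists i, U i x) :
  exists rho : I -> orbit_space f -> R,
    partition_of_unity_subordinate (d_one d f) U rho /\
    (forall i, continuous_metric (d_one d f) (fun a b => Rabs (a - b)) (rho i)) /\
    (forall i, lipschitz_wrt (d_infty d f) (rho i)).
Proof.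
  pose proof Hd as (_ & d_zero & d_sym & d_triangle).
  destruct (compact_bounded d (fun a => proj2 (d_zero a a) eq_refl) d_sym d_triangle Hcpt)
    as [D HD].
  destruct (lipschitz_partition_of_unity (d_one d f) (d_one_refl d f Hd)
              (d_one_sym d f Hd) (d_one_triangle d f Hd D HD) U
              (d_one_compact d f Hd D HD Hcpt Hf) HUopen HUcover)
    as [rho [Hpu [L [HL0 HL]]]].
  exists rho. split; [exact Hpu|split].
  - intros i. exact (lipschitz_continuous (d_one d f) (rho i) L HL0 (HL i)).
  - intros i. exists (L * 3). intros x y. eapply Rle_trans; [apply HL|].
    rewrite Rmult_assoc. apply Rmult_le_compat_l; [exact HL0|].
    apply (d_one_le_d_infty d f Hd D HD).
Qed.
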